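(* Assume that $N$ is a semi-free DG $B$-module. Let $N'$ be a second semi-free DG $B$-module built in the same way from modules $M_i'$ and maps $\xi_i'$, $\tau_i'$, $\delta_i'$, and $\alpha_i'$. Fix an integer $p$. A sequence of $R$-module homomorphisms $\{S_i\colon N_i\to N'_{i+p}\}$ is a DG $B$-module homomorphism $N\to N'$ of degree $p$ if and only if it is a degree-$p$ homomorphism $N\to N'$ of the underlying $R$-complexes such that for all integers $i$ we have $S_i=\begin{bmatrix}(-1)^pz_{i-1} & v_i \\ 0 & z_i\end{bmatrix}$ for some $z_i\colon M_i\to M'_{i+p}$ and $v_i\colon M_i\to M'_{i+p-1}$ and $v_{i+j}(\gamma_{i,s}m_j)=(-1)^{i(p+1)}\gamma_{i,s}v_j(m_j)$ and $z_{i+j}(\gamma_{i,s}m_j)=(-1)^{ip}\gamma_{i,s}z_j(m_j)$ for $s=1,\ldots,r_i$ and for all $m_j\in M_j$ for each integer $j$.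
   Context: Let $R$ be a commutative noetherian ring. Let $A$ be a (commutative, positively graded) DG $R$-algebra such that each $A_i$ is free over $R$ of finite rank, with fixed basis $\{\gamma_{i,1},\ldots,\gamma_{i,r_i}\}$ of $A_i$. Let $t\in R$ and $B=K^R(t)\otimes_R A$, where $K^R(t)$ is the Koszul complex on $t$; identify $B_i$ with $A_{i-1}\oplus A_i$ (column vectors). For cardinals $\beta_i$ ($\beta_i=0$ for $i\ll0$) set $M_i=\bigoplus_{j\ge0}A_j^{(\beta_{i-j})}$. Given $R$-linear maps $\xi_i\colon M_i\to M_{i-1}$, $\tau_i\colon M_i\to M_i$, $\delta_i\colon M_i\to M_{i-2}$, $\alpha_i\colon M_i\to M_{i-1}$, $N$ is the sequence with $N_i=M_{i-1}\oplus M_i$ and $\partial^N_i=\left[\begin{smallmatrix}\xi_{i-1}&\delta_i\\ \tau_{i-1}&\alpha_i\end{smallmatrix}\right]$, with $B$ acting by $\left[\begin{smallmatrix}a_{i-1}\\ a_i\end{smallmatrix}\right]\left[\begin{smallmatrix}m_{j-1}\\ m_j\end{smallmatrix}\right]=\left[\begin{smallmatrix}a_{i-1}m_j+(-1)^ia_im_{j-1}\\ a_im_j\end{smallmatrix}\right]$. A DG $B$-module homomorphism of degree $p$ is an $R$-complex homomorphism $f$ of degree $p$ with $f(bn)=(-1)^{p|b|}bf(n)$. *)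

From HB Require Import structures.
From mathcomp Require Import all_boot all_order all_algebra.
From Stdlib Require List.
Unset Strict Implicit. Unset Printing Implicit Defensive.
Import Order.TTheory GRing.Theory Num.Theory.
Local Open Scope ring_scope.

Definition sgn {R : pzRingType} (z : int) : R := (-1) ^+ (absz z).

Definition is_ideal {R : comPzRingType} (I : R -> Prop) : Prop :=
  I 0 /\ (forall x y, I x -> I y -> I (x + y)) /\ (forall c x, I x -> I (c * x)).

Definition noetherian (R : comPzRingType) : Prop :=
  forall I : R -> Prop, is_ideal I ->
    exists s : seq R, forall x, I x <->
      exists c : 'I_(size s) -> R, x = \sum_(k < size s) c k * s`_k.

(* The DG R-algebra A, given as the total algebra (direct sum of its  *)
(* homogeneous components A_i = [pred a | Ah i a]) with differential *)
(* dA.                                                                 *)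
Section DGAlg.
Context {R : comPzRingType} {A : algType R}.
Variables (Ah : int -> A -> Prop) (dA : A -> A).

Definition DG_comm_alg : Prop :=
  (forall i, Ah i 0) /\
  (forall i a b, Ah i a -> Ah i b -> Ah i (a + b)) /\
  (forall i c a, Ah i a -> Ah i (c *: a)) /\
  (forall a, exists (s : seq int) (f : int -> A),
      (forall i, Ah i (f i)) /\ a = \sum_(i <- s) f i) /\
  (forall (s : seq int) (f : int -> A), uniq s -> (forall i, Ah i (f i)) ->
      \sum_(i <- s) f i = 0 -> forall i, i \in s -> f i = 0) /\
  (forall i a, i < 0 -> Ah i a -> a = 0) /\
  Ah 0 1 /\
  (forall i j a b, Ah i a -> Ah j b -> Ah (i + j) (a * b)) /\
  (forall i j a b, Ah i a -> Ah j b -> a * b = sgn (i * j) *: (b * a)) /\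
  (forall i a, odd (absz i) -> Ah i a -> a * a = 0) /\
  (forall a b, dA (a + b) = dA a + dA b) /\
  (forall c a, dA (c *: a) = c *: dA a) /\
  (forall i a, Ah i a -> Ah (i - 1) (dA a)) /\
  (forall a, dA (dA a) = 0) /\
  (forall i a b, Ah i a -> dA (a * b) = dA a * b + sgn i *: (a * dA b)).

Definition fixed_basis (r : nat -> nat) (gamma : forall i : nat, 'I_(r i) -> A) : Prop :=
  forall i : nat,
    (forall s, Ah i (gamma i s)) /\
    (forall a, Ah i a -> exists c : 'I_(r i) -> R, a = \sum_s c s *: gamma i s) /\
    (forall c : 'I_(r i) -> R, \sum_s c s *: gamma i s = 0 -> forall s, c s = 0).

End DGAlg.

(* The graded A-modules M_i = \bigoplus_{j>=0} A_j^{(beta_{i-j})}.    *)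
(* An element of the direct sum over all i is a family m k b in A     *)
(* indexed by k : int and b : beta k (the b-th copy of A in the        *)
(* summands A_{i-k}^{(beta_k)}); it lies in M_i iff each m k b lies in *)
(* A_{i-k} and the family has finite support.                          *)
Definition Mt (A : Type) (beta : int -> Type) : Type := forall k : int, beta k -> A.
Definition Nt (A : Type) (beta : int -> Type) : Type := (Mt A beta * Mt A beta)%type.

Definition bounded_below (beta : int -> Type) : Prop :=
  exists k0 : int, forall k, k < k0 -> beta k -> False.

Section Mod.
Context {R : comPzRingType} {A : algType R}.


Context {beta : int -> Type}.

Definition zeroM : Mt A beta := fun k b => 0.
Definition addM (m1 m2 : Mt A beta) : Mt A beta := fun k b => m1 k b + m2 k b.
Definition scaleM (c : R) (m : Mt A beta) : Mt A beta := fun k b => c *: m k b.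
Definition actM (a : A) (m : Mt A beta) : Mt A beta := fun k b => a * m k b.

Definition finsupp (m : Mt A beta) : Prop :=
  (exists s : seq int, forall k, k \notin s -> forall b, m k b = 0) /\
  (forall k, exists l : list (beta k), forall b, m k b <> 0 -> List.In b l).

Definition Mdeg (Ah : int -> A -> Prop) (i : int) (m : Mt A beta) : Prop :=
  (forall k b, Ah (i - k) (m k b)) /\ finsupp m.

(* The graded module N: N_i = M_{i-1} (+) M_i, column vectors (x, y). *)
Definition zeroN : Nt A beta := (zeroM, zeroM).
Definition addN (n1 n2 : Nt A beta) : Nt A beta := (addM n1.1 n2.1, addM n1.2 n2.2).
Definition scaleN (c : R) (n : Nt A beta) : Nt A beta := (scaleM c n.1, scaleM c n.2).
Definition Ndeg (Ah : int -> A -> Prop) (i : int) (n : Nt A beta) : Prop :=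
  Mdeg Ah (i - 1) n.1 /\ Mdeg Ah i n.2.

(* Action of b = [a'; a] \in B_i = A_{i-1} (+) A_i on n = [x; y]:
   b n = [a' y + (-1)^i a x ; a y]. *)
Definition actB (i : int) (a' a : A) (n : Nt A beta) : Nt A beta :=
  (addM (actM a' n.2) (scaleM (sgn i) (actM a n.1)), actM a n.2).

Definition dN (xi tau delta alpha : int -> Mt A beta -> Mt A beta) (i : int) (n : Nt A beta) : Nt A beta :=
  (addM (xi (i - 1) n.1) (delta i n.2), addM (tau (i - 1) n.1) (alpha i n.2)).

End Mod.

(* R-linear maps M_i -> M'_j (given as functions on the total carriers) *)
Definition Mhom {R : comPzRingType} {A : algType R} (Ah : int -> A -> Prop)
  {beta beta' : int -> Type} (i j : int) (f : Mt A beta -> Mt A beta') : Prop :=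
  (forall m, Mdeg Ah i m -> Mdeg Ah j (f m)) /\
  (forall m1 m2, Mdeg Ah i m1 -> Mdeg Ah i m2 -> f (addM m1 m2) = addM (f m1) (f m2)) /\
  (forall c m, Mdeg Ah i m -> f (scaleM c m) = scaleM c (f m)).

Definition Nhom {R : comPzRingType} {A : algType R} (Ah : int -> A -> Prop)
  {beta beta' : int -> Type} (i j : int) (f : Nt A beta -> Nt A beta') : Prop :=
  (forall n, Ndeg Ah i n -> Ndeg Ah j (f n)) /\
  (forall n1 n2, Ndeg Ah i n1 -> Ndeg Ah i n2 -> f (addN n1 n2) = addN (f n1) (f n2)) /\
  (forall c n, Ndeg Ah i n -> f (scaleN c n) = scaleN c (f n)).

Section DGB.
Context {R : comPzRingType} {A : algType R}.
Variables (Ah : int -> A -> Prop) (dA : A -> A) (t : R).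

Definition structure_maps {beta : int -> Type} (xi tau delta alpha : int -> Mt A beta -> Mt A beta) :=
  forall i, Mhom Ah i (i - 1) (xi i) /\ Mhom Ah i i (tau i) /\
            Mhom Ah i (i - 2) (delta i) /\ Mhom Ah i (i - 1) (alpha i).

(* B = K^R(t) (x) A, B_i = A_{i-1} (+) A_i; its differential is
   d[a'; a] = [- dA a'; t a' + dA a]. *)
Definition DGBmodule {beta : int -> Type} (xi tau delta alpha : int -> Mt A beta -> Mt A beta) :=
  (forall i n, Ndeg Ah i n -> dN xi tau delta alpha (i - 1) (dN xi tau delta alpha i n) = zeroN) /\
  (forall i j a' a n, Ah (i - 1) a' -> Ah i a -> Ndeg Ah j n ->
     dN xi tau delta alpha (i + j) (actB i a' a n) =
     addN (actB (i - 1) (- dA a') (t *: a' + dA a) n)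
          (scaleN (sgn i) (actB i a' a (dN xi tau delta alpha j n)))).

Definition complex_hom {beta beta' : int -> Type}
  (xi tau delta alpha : int -> Mt A beta -> Mt A beta)
  (xi' tau' delta' alpha' : int -> Mt A beta' -> Mt A beta')
  (p : int) (S : int -> Nt A beta -> Nt A beta') : Prop :=
  (forall i, Nhom Ah i (i + p) (S i)) /\
  (forall i n, Ndeg Ah i n ->
     dN xi' tau' delta' alpha' (i + p) (S i n) =
     scaleN (sgn p) (S (i - 1) (dN xi tau delta alpha i n))).

Definition DGB_hom {beta beta' : int -> Type}
  (xi tau delta alpha : int -> Mt A beta -> Mt A beta)
  (xi' tau' delta' alpha' : int -> Mt A beta' -> Mt A beta')
  (p : int) (S : int -> Nt A beta -> Nt A beta') : Prop :=
  complex_hom xi tau delta alpha xi' tau' delta' alpha' p S /\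
  (forall i j a' a n, Ah (i - 1) a' -> Ah i a -> Ndeg Ah j n ->
     S (i + j) (actB i a' a n) = scaleN (sgn (p * i)) (actB i a' a (S j n))).

End DGB.

(* The element [1; 0] of B_1 (the generator of the Koszul complex) maps the
   summand M_{i-1} of N_{i-1} (second coordinate) isomorphically onto the
   summand M_{i-1} of N_i (first coordinate).  Hence a B-linear S is
   determined by its values on the second summand, which gives the
   triangular shape of S_i, and the equivariance of its entries under A is
   B-linearity restricted to A = [0; A] inside B.  Conversely, the entries are
   equivariant under all of A once they are so on the bases of the A_i, and
   B-linearity of the triangular matrix then reduces to an identity of
   signs. *)

From HB Require Import structures.
From mathcomp Require Import all_boot all_order all_algebra zify.
From Stdlib Require Import FunctionalExtensionality.
Import Order.TTheory GRing.Theory Num.Theory.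
Local Open Scope ring_scope.
Set Implicit Arguments.
Unset Strict Implicit.

Section Sign.
Variable R : pzRingType.

Lemma sgnD (a b : int) : sgn (a + b) = sgn a * sgn b :> R.
Proof.
rewrite /sgn -exprD -signr_odd -[in RHS]signr_odd; congr (_ ^+ _).
rewrite -!modn2; lia.
Qed.

Lemma sgnN (a : int) : sgn (- a) = sgn a :> R.
Proof. by rewrite /sgn abszN. Qed.

Lemma sgn_sq (a : int) : sgn a * sgn a = 1 :> R.
Proof. by rewrite -sgnD /sgn -signr_odd -modn2 (_ : _ %% 2 = 0)%N //; lia. Qed.

End Sign.

Section ModuleCalculus.
Variables (R : comPzRingType) (A : algType R) (beta : int -> Type).
Implicit Types (m : Mt A beta) (n : Nt A beta).

Lemma Mt_ext m1 m2 : (forall k b, m1 k b = m2 k b) -> m1 = m2.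
Proof.
move=> eq_m; apply: functional_extensionality_dep => k.
exact: functional_extensionality_dep.
Qed.

Lemma add0M m : addM zeroM m = m.
Proof. by apply: Mt_ext => k b; rewrite /addM add0r. Qed.

Lemma addM0 m : addM m zeroM = m.
Proof. by apply: Mt_ext => k b; rewrite /addM addr0. Qed.

Lemma scaleM0 c : scaleM c (@zeroM R A beta) = zeroM.
Proof. by apply: Mt_ext => k b; rewrite /scaleM scaler0. Qed.

Lemma scale0M m : scaleM 0 m = zeroM.
Proof. by apply: Mt_ext => k b; rewrite /scaleM scale0r. Qed.

Lemma act0M m : actM 0 m = zeroM.
Proof. by apply: Mt_ext => k b; rewrite /actM mul0r. Qed.

Lemma actM0 a : actM a (@zeroM R A beta) = zeroM.
Proof. by apply: Mt_ext => k b; rewrite /actM mulr0. Qed.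

Lemma actM1 m : actM 1 m = m.
Proof. by apply: Mt_ext => k b; rewrite /actM mul1r. Qed.

Lemma scaleMA c1 c2 m : scaleM c1 (scaleM c2 m) = scaleM (c1 * c2) m.
Proof. by apply: Mt_ext => k b; rewrite /scaleM scalerA. Qed.

Lemma actMZl c a m : actM (c *: a) m = scaleM c (actM a m).
Proof. by apply: Mt_ext => k b; rewrite /actM /scaleM scalerAl. Qed.

Lemma actMDl a1 a2 m : actM (a1 + a2) m = addM (actM a1 m) (actM a2 m).
Proof. by apply: Mt_ext => k b; rewrite /actM /addM mulrDl. Qed.

Lemma splitN n : n = addN (n.1, zeroM) (zeroM, n.2).
Proof. by case: n => n1 n2; rewrite /addN /= addM0 add0M. Qed.

Lemma inr_addM m1 m2 : (zeroM, addM m1 m2) = addN (zeroM, m1) (zeroM, m2).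
Proof. by rewrite /addN /= add0M. Qed.

Lemma inr_scaleM c m : (zeroM, scaleM c m) = scaleN c (zeroM, m).
Proof. by rewrite /scaleN /= scaleM0. Qed.

Lemma actB_koszul n : actB 1 1 0 n = (n.2, zeroM).
Proof. by rewrite /actB actM1 act0M scaleM0 addM0 act0M. Qed.

Lemma actB0 i a n : actB i 0 a n = (scaleM (sgn i) (actM a n.1), actM a n.2).
Proof. by rewrite /actB act0M add0M. Qed.

Lemma actB0_inr i a m : actB i 0 a (zeroM, m) = (zeroM, actM a m).
Proof. by rewrite actB0 actM0 scaleM0. Qed.

End ModuleCalculus.

Section GradedModule.
Variables (R : comPzRingType) (A : algType R) (Ah : int -> A -> Prop).
Hypothesis Ah0 : forall i, Ah i 0.
Hypothesis AhD : forall i a b, Ah i a -> Ah i b -> Ah i (a + b).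
Hypothesis AhZ : forall i c a, Ah i a -> Ah i (c *: a).
Hypothesis AhM : forall i j a b, Ah i a -> Ah j b -> Ah (i + j) (a * b).
Hypothesis Ah_neg : forall i a, i < 0 -> Ah i a -> a = 0.
Variables beta beta' : int -> Type.

Lemma Mdeg0 i : Mdeg Ah i (@zeroM R A beta).
Proof. by split=> //; split=> [|k]; [exists [::] | exists nil]. Qed.

Lemma MdegD i (m1 m2 : Mt A beta) :
  Mdeg Ah i m1 -> Mdeg Ah i m2 -> Mdeg Ah i (addM m1 m2).
Proof.
move=> [deg1 [[s1 supp1] fin1]] [deg2 [[s2 supp2] fin2]].
split=> [k b|]; first exact: AhD.
split=> [|k].
  exists (s1 ++ s2) => k; rewrite mem_cat negb_or => /andP[k1 k2] b.
  by rewrite /addM supp1 // supp2 // addr0.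
have [l1 in1] := fin1 k; have [l2 in2] := fin2 k.
exists (l1 ++ l2) => b nz_b; apply: List.in_or_app.
have [m1_0|m1_nz] := eqVneq (m1 k b) 0; last by left; apply/in1/eqP.
by right; apply: in2 => m2_0; apply: nz_b; rewrite /addM m1_0 m2_0 addr0.
Qed.

Lemma MdegZ i c (m : Mt A beta) : Mdeg Ah i m -> Mdeg Ah i (scaleM c m).
Proof.
move=> [deg [[s supp] fin]]; split=> [k b|]; first exact: AhZ.
split=> [|k]; first by exists s => k ks b; rewrite /scaleM supp // scaler0.
have [l inl] := fin k; exists l => b nz_b; apply: inl => m0; apply: nz_b.
by rewrite /scaleM m0 scaler0.
Qed.

Lemma Mdeg_actM i j a (m : Mt A beta) :
  Ah i a -> Mdeg Ah j m -> Mdeg Ah (i + j) (actM a m).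
Proof.
move=> Ha [deg [[s supp] fin]]; split=> [k b|].
  by rewrite -addrA; apply: AhM.
split=> [|k]; first by exists s => k ks b; rewrite /actM supp // mulr0.
have [l inl] := fin k; exists l => b nz_b; apply: inl => m0; apply: nz_b.
by rewrite /actM m0 mulr0.
Qed.

Lemma Mhom0 i j (F : Mt A beta -> Mt A beta') : Mhom Ah i j F -> F zeroM = zeroM.
Proof.
move=> [_ [_ FZ]].
by rewrite -(scale0M zeroM) FZ ?scale0M //; apply: Mdeg0.
Qed.

Lemma Mhom_actM_lincomb (I : Type) (gam : I -> A) (c : I -> R) (l : seq I)
    k j d (F : Mt A beta -> Mt A beta') (y : Mt A beta') e (m : Mt A beta) :
  (forall s, Ah k (gam s)) -> Mhom Ah (k + j) d F -> Mdeg Ah j m ->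
  (forall s, F (actM (gam s) m) = scaleM e (actM (gam s) y)) ->
  F (actM (\sum_(s <- l) c s *: gam s) m) = scaleM e (actM (\sum_(s <- l) c s *: gam s) y).
Proof.
move=> Ahgam homF degm Fgam; have [_ [FD FZ]] := homF.
have Ahsum l' : Ah k (\sum_(s <- l') c s *: gam s).
  by apply: big_ind => [||s _]; [exact: Ah0 | exact: AhD | exact: AhZ].
elim: l => [|s l IH]; first by rewrite !big_nil !act0M (Mhom0 homF) scaleM0.
have deg_s := Mdeg_actM (Ahgam s) degm.
have deg_l := Mdeg_actM (Ahsum l) degm.
rewrite !big_cons !actMDl !actMZl FD ?FZ ?Fgam ?IH //; last exact: MdegZ.
by apply: Mt_ext => k' b; rewrite /addM /scaleM !scalerDr !scalerA mulrC.
Qed.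

Lemma Mhom_actM_homogeneous (r : nat -> nat) (gamma : forall i : nat, 'I_(r i) -> A)
    (F : int -> Mt A beta -> Mt A beta') (e : int -> R) (d : int -> int) :
  fixed_basis Ah r gamma -> (forall i, Mhom Ah i (d i) (F i)) ->
  (forall (i : nat) (s : 'I_(r i)) j m, Mdeg Ah j m ->
     F (i%:Z + j) (actM (gamma i s) m) = scaleM (e i) (actM (gamma i s) (F j m))) ->
  forall k a j m, Ah k a -> Mdeg Ah j m ->
    F (k + j) (actM a m) = scaleM (e k) (actM a (F j m)).
Proof.
move=> basis homF Fgamma [i|i] a j m Ha degm; last first.
  by rewrite (Ah_neg _ Ha) // !act0M (Mhom0 (homF _)) scaleM0.
have [Ahgamma [span _]] := basis i.
have [c ->] := span a Ha.
by apply: (Mhom_actM_lincomb c (index_enum _) Ahgamma (homF _) degm) => s; apply: Fgamma.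
Qed.

End GradedModule.

Section TriangularForm.
Variables (R : comPzRingType) (A : algType R) (Ah : int -> A -> Prop).
Hypothesis Ah0 : forall i, Ah i 0.
Hypothesis AhD : forall i a b, Ah i a -> Ah i b -> Ah i (a + b).
Hypothesis AhZ : forall i c a, Ah i a -> Ah i (c *: a).
Hypothesis AhM : forall i j a b, Ah i a -> Ah j b -> Ah (i + j) (a * b).
Hypothesis Ah01 : Ah 0 1.
Variables (beta beta' : int -> Type) (p : int) (S : int -> Nt A beta -> Nt A beta').

Definition B_linear : Prop :=
  forall i j a' a n, Ah (i - 1) a' -> Ah i a -> Ndeg Ah j n ->
    S (i + j) (actB i a' a n) = scaleN (sgn (p * i)) (actB i a' a (S j n)).

(* The entries z_i and v_i of the paper's matrix of f : N_i -> N'_j. *)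
Definition diag_entry (f : Nt A beta -> Nt A beta') (m : Mt A beta) := (f (zeroM, m)).2.
Definition corner_entry (f : Nt A beta -> Nt A beta') (m : Mt A beta) := (f (zeroM, m)).1.

Lemma Ndeg_inr i (m : Mt A beta) : Mdeg Ah i m -> Ndeg Ah i (zeroM, m).
Proof. by split=> //; apply: Mdeg0. Qed.

Lemma Mhom_diag_entry i j (f : Nt A beta -> Nt A beta') :
  Nhom Ah i j f -> Mhom Ah i j (diag_entry f).
Proof.
move=> [degf [fD fZ]]; split=> [m /Ndeg_inr/degf [] //|].
split=> [m1 m2 deg1 deg2|c m degm]; rewrite /diag_entry.
  by rewrite inr_addM fD //; apply: Ndeg_inr.
by rewrite inr_scaleM fZ //; apply: Ndeg_inr.
Qed.

Lemma Mhom_corner_entry i j (f : Nt A beta -> Nt A beta') :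
  Nhom Ah i j f -> Mhom Ah i (j - 1) (corner_entry f).
Proof.
move=> [degf [fD fZ]]; split=> [m /Ndeg_inr/degf [] //|].
split=> [m1 m2 deg1 deg2|c m degm]; rewrite /corner_entry.
  by rewrite inr_addM fD //; apply: Ndeg_inr.
by rewrite inr_scaleM fZ //; apply: Ndeg_inr.
Qed.

Lemma B_linear_triangular i n :
  B_linear -> (forall i, Nhom Ah i (i + p) (S i)) -> Ndeg Ah i n ->
  S i n = (addM (scaleM (sgn p) (diag_entry (S (i - 1)) n.1)) (corner_entry (S i) n.2),
           diag_entry (S i) n.2).
Proof.
move=> linS homS [deg1 deg2].
have Ah1 : Ah (1 - 1) 1 by rewrite subrr.
have S_koszul : S i (n.1, zeroM) = (scaleM (sgn p) (diag_entry (S (i - 1)) n.1), zeroM).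
  have := linS 1 (i - 1) 1 0 (zeroM, n.1) Ah1 (Ah0 1) (Ndeg_inr deg1).
  by rewrite addrC subrK !actB_koszul mulr1 /scaleN scaleM0.
have [_ [SD _]] := homS i.
rewrite {1}(splitN n) SD ?S_koszul; last exact: Ndeg_inr.
  by rewrite /addN /= add0M.
by split=> //; apply: Mdeg0.
Qed.

Lemma B_linear_entries_equivariant i j a (m : Mt A beta) :
  B_linear -> Ah i a -> Mdeg Ah j m ->
  diag_entry (S (i + j)) (actM a m) = scaleM (sgn (i * p)) (actM a (diag_entry (S j) m)) /\
  corner_entry (S (i + j)) (actM a m) =
    scaleM (sgn (i * (p + 1))) (actM a (corner_entry (S j) m)).
Proof.
move=> linS Ha degm.
have := linS i j 0 a (zeroM, m) (Ah0 _) Ha (Ndeg_inr degm).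
rewrite /diag_entry /corner_entry actB0_inr actB0 => ->.
by rewrite /= scaleMA mulrDr mulr1 sgnD [i * p]mulrC.
Qed.

Lemma B_linear_of_triangular (z v : int -> Mt A beta -> Mt A beta') :
  (forall i, Mhom Ah i (i + p) (z i)) ->
  (forall k a j m, Ah k a -> Mdeg Ah j m ->
     z (k + j) (actM a m) = scaleM (sgn (k * p)) (actM a (z j m))) ->
  (forall k a j m, Ah k a -> Mdeg Ah j m ->
     v (k + j) (actM a m) = scaleM (sgn (k * (p + 1))) (actM a (v j m))) ->
  (forall i n, Ndeg Ah i n ->
     S i n = (addM (scaleM (sgn p) (z (i - 1) n.1)) (v i n.2), z i n.2)) ->
  B_linear.
Proof.
move=> homz zeq veq triS i j a' a [n1 n2] Ha' Ha [/= deg1 deg2].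
have deg_a'n2 : Mdeg Ah (i + j - 1) (actM a' n2).
  by rewrite -addrAC; apply: Mdeg_actM.
have deg_an1 : Mdeg Ah (i + j - 1) (actM a n1) by rewrite -addrA; apply: Mdeg_actM.
have deg_act : Ndeg Ah (i + j) (actB i a' a (n1, n2)).
  by split; [apply: MdegD => //; apply: MdegZ | apply: Mdeg_actM].
have za' := zeq _ _ _ _ Ha' deg2; rewrite addrAC in za'.
have za := zeq _ _ _ _ Ha deg1; rewrite addrA in za.
have [_ [zD zZ]] := homz (i + j - 1).
rewrite (triS (i + j)) // (triS j) // /= zD ?zZ //; last exact: MdegZ.
rewrite za' za (zeq _ _ _ _ Ha deg2) (veq _ _ _ _ Ha deg2) [p * i]mulrC.
rewrite /scaleN /actB /=; congr pair; apply: Mt_ext => k b.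
rewrite /addM /scaleM /actM /= mulrBl mul1r mulrDr mulr1 !sgnD sgnN.
rewrite mulrDr -scalerAr !scalerDr !scalerA addrA.
congr (_ *: _ + _ *: _ + _); first by rewrite mulrCA sgn_sq mulr1.
by rewrite mulrAC [RHS]mulrC mulrA.
Qed.

End TriangularForm.

Theorem lemma2p11
  (R : comPzRingType) (A : algType R) (Ah : int -> A -> Prop) (dA : A -> A)
  (r : nat -> nat) (gamma : forall i : nat, 'I_(r i) -> A) (t : R)
  (beta beta' : int -> Type)
  (xi tau delta alpha : int -> Mt A beta -> Mt A beta)
  (xi' tau' delta' alpha' : int -> Mt A beta' -> Mt A beta')
  (p : int) (S : int -> Nt A beta -> Nt A beta') :
  noetherian R ->
  DG_comm_alg Ah dA ->
  fixed_basis Ah r gamma ->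
  bounded_below beta -> bounded_below beta' ->
  structure_maps Ah xi tau delta alpha ->
  structure_maps Ah xi' tau' delta' alpha' ->
  DGBmodule Ah dA t xi tau delta alpha ->
  DGBmodule Ah dA t xi' tau' delta' alpha' ->
  (forall i, Nhom Ah i (i + p) (S i)) ->
  (DGB_hom Ah xi tau delta alpha xi' tau' delta' alpha' p S <->
   (complex_hom Ah xi tau delta alpha xi' tau' delta' alpha' p S /\
    exists (z v : int -> Mt A beta -> Mt A beta'),
      (forall i, Mhom Ah i (i + p) (z i)) /\
      (forall i, Mhom Ah i (i + p - 1) (v i)) /\
      (forall i n, Ndeg Ah i n ->
         S i n = (addM (scaleM (sgn p) (z (i - 1) n.1)) (v i n.2), z i n.2)) /\
      (forall (i : nat) (s : 'I_(r i)) (j : int) (m : Mt A beta), Mdeg Ah j m ->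
         v (i%:Z + j) (actM (gamma i s) m) = scaleM (sgn (i%:Z * (p + 1))) (actM (gamma i s) (v j m))) /\
      (forall (i : nat) (s : 'I_(r i)) (j : int) (m : Mt A beta), Mdeg Ah j m ->
         z (i%:Z + j) (actM (gamma i s) m) = scaleM (sgn (i%:Z * p)) (actM (gamma i s) (z j m))))).
Proof.
move=> _ [Ah0 [AhD [AhZ [_ [_ [Ah_neg [Ah01 [AhM _]]]]]]]] basis _ _ _ _ _ _ homS.
split=> [[homc linS] | [homc [z [v [homz [homv [triS [vgamma zgamma]]]]]]]]; split=> //.
  exists (fun i => diag_entry (S i)), (fun i => corner_entry (S i)).
  split=> [i|]; first exact: (Mhom_diag_entry Ah0 (homS i)).
  split=> [i|]; first exact: (Mhom_corner_entry Ah0 (homS i)).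
  split=> [i n|]; first exact: (B_linear_triangular Ah0 Ah01 linS homS).
  have entries_eq i s j (m : Mt A beta) (degm : Mdeg Ah j m) :=
    B_linear_entries_equivariant Ah0 linS (proj1 (basis i) s) degm.
  by split=> i s j m degm; have [] := entries_eq i s j m degm.
apply: (B_linear_of_triangular AhD AhZ AhM homz _ _ triS).
  exact: (Mhom_actM_homogeneous (e := fun k => sgn (k * p)) Ah0 AhD AhZ AhM Ah_neg basis homz).
exact: (Mhom_actM_homogeneous (e := fun k => sgn (k * (p + 1))) Ah0 AhD AhZ AhM Ah_neg
  basis homv).
Qed.
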